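(* Let $(F,G)$ be an $(N,n)$ dual pair for $\mathcal H$. Then: (i) if $(F,G)\in\mathcal F^{(1)}$ then $(F,G)\in\mathcal R^{(1)}$; (ii) $(F,G)\in\mathcal F^{(1)}$ if and only if $(F,G)\in\mathcal N^{(1)}$; (iii) if $(F,G)\in\mathcal N^{(1)}$ then $(F,G)\in\mathcal R^{(1)}$.
   Context: $\mathcal H$ is a complex Hilbert space of finite dimension $n$, inner product linear in the first argument, $N\ge n$. A finite sequence $F=\{f_i\}_{i=1}^N$ is a frame if there are $0<A\le B$ with $A\|f\|^2\le\sum_i|\langle f,f_i\rangle|^2\le B\|f\|^2$ for all $f$. $G=\{g_i\}_{i=1}^N$ is a dual of $F$ if $f=\sum_i\langle f,g_i\rangle f_i$ for all $f$; $(F,G)$ is then an $(N,n)$ dual pair. $E_{\Lambda,F,G}f=\sum_{i\in\Lambda}\langle f,f_i\rangle g_i$. For a measure $\mathcal M$ on operators, let $\mathcal M^{(1)}_{F,G}=\max_{1\le i\le N}\mathcal M(E_{\{i\},F,G})$ and call $(F,G)$ optimal for $\mathcal M$ if $\mathcal M^{(1)}_{F,G}$ equals the infimum of $\mathcal M^{(1)}_{F',G'}$ over all $(N,n)$ dual pairs $(F',G')$ for $\mathcal H$. $\mathcal F^{(1)}$, $\mathcal R^{(1)}$, $\mathcal N^{(1)}$ denote the sets of optimal pairs for, respectively, the Frobenius norm $\|T\|_{\mathcal F}=\sqrt{\operatorname{tr}(T^*T)}$, the spectral radius $\rho(T)$, and the numerical radius $\omega(T)=\sup\{|\langle Tf,f\rangle|:\|f\|=1\}$.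 *)

From mathcomp Require Import all_boot all_order all_algebra.
From mathcomp Require Import classical_sets reals.
From mathcomp.real_closed Require Export complex.

Set Implicit Arguments.
Unset Strict Implicit.
Unset Printing Implicit Defensive.

Import Order.TTheory GRing.Theory Num.Theory.
Local Open Scope ring_scope.
Local Open Scope classical_set_scope.

(* The Hilbert space H of dimension n is C^n = 'cV[R[i]]_n, R : realType.  *)

(* inner product, linear in the first argument *)
Definition ip (R : realType) (n : nat) (x y : 'cV[R[i]]_n) : R[i] :=
  \sum_(k < n) x k 0 * conjc (y k 0).

Definition sqnorm (R : realType) (n : nat) (x : 'cV[R[i]]_n) : R :=
  complex.Re (ip x x).

Definition cabs (R : realType) (z : R[i]) : R := ComplexField.Normc.normc z.

Definition adjmx (R : realType) (m p : nat) (A : 'M[R[i]]_(m, p)) : 'M[R[i]]_(p, m) :=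
  (map_mx conjc A)^T.

Definition is_frame (R : realType) (N n : nat) (F : 'I_N -> 'cV[R[i]]_n) : Prop :=
  exists A B : R, 0 < A /\ A <= B /\
    forall f : 'cV[R[i]]_n,
      A * sqnorm f <= \sum_(i < N) cabs (ip f (F i)) ^+ 2 <= B * sqnorm f.

Definition is_dual (R : realType) (N n : nat) (F G : 'I_N -> 'cV[R[i]]_n) : Prop :=
  forall f : 'cV[R[i]]_n, f = \sum_(i < N) ip f (G i) *: F i.

Definition dual_pair (R : realType) (N n : nat) (F G : 'I_N -> 'cV[R[i]]_n) : Prop :=
  is_frame F /\ is_frame G /\ is_dual F G.

(* E_{{i},F,G} f = <f, f_i> g_i, as a matrix acting on column vectors *)
Definition Eop (R : realType) (N n : nat) (F G : 'I_N -> 'cV[R[i]]_n) (i : 'I_N)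
  : 'M[R[i]]_n := G i *m adjmx (F i).

Definition frob (R : realType) (n : nat) (T : 'M[R[i]]_n) : R :=
  Num.sqrt (complex.Re (\tr (adjmx T *m T))).

Definition is_eigenvalue (R : realType) (n : nat) (T : 'M[R[i]]_n) (l : R[i]) : Prop :=
  exists2 v : 'cV[R[i]]_n, v != 0 & T *m v = l *: v.

Definition specrad (R : realType) (n : nat) (T : 'M[R[i]]_n) : R :=
  sup [set cabs l | l in [set l | is_eigenvalue T l]].

Definition numrad (R : realType) (n : nat) (T : 'M[R[i]]_n) : R :=
  sup [set cabs (ip (T *m f) f) | f in [set f : 'cV[R[i]]_n | sqnorm f = 1]].

(* M^{(1)}_{F,G} = max_i M(E_{{i},F,G})  (all measures here are >= 0) *)
Definition M1 (R : realType) (N n : nat) (M : 'M[R[i]]_n -> R)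
  (F G : 'I_N -> 'cV[R[i]]_n) : R :=
  \big[Num.max/0]_(i < N) M (Eop F G i).

Definition optimal (R : realType) (N n : nat) (M : 'M[R[i]]_n -> R)
  (F G : 'I_N -> 'cV[R[i]]_n) : Prop :=
  dual_pair F G /\
  M1 M F G = inf [set r : R | exists (F' G' : 'I_N -> 'cV[R[i]]_n),
                                  dual_pair F' G' /\ r = M1 M F' G'].

From mathcomp Require Import all_boot all_order all_algebra cyclic separable cyclotomic.
From mathcomp Require Import classical_sets reals.
From mathcomp.real_closed Require Import complex.
From mathcomp Require Import ring.

(* Write c = n / N.  Duality gives sum_i <f_i, g_i> = tr Id = n, so |<f_i, g_i>| >= c for
   some i.  For a rank-one operator E = g f^*, the spectral radius equals |<g, f>| and the
   numerical radius lies between |<g, f>| and ||E||_F = ||g|| ||f||; hence c bounds M^(1)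
   from below for all three measures, and the harmonic frame (rows of the normalized
   N x N Fourier matrix cut down to n columns) attains c for all of them.  Thus a dual pair
   is optimal exactly when every M(E_i) is at most c, which passes from the Frobenius norm
   to rho and omega.  Conversely, omega(E_i) <= c forces every trace <g_i, f_i> to equal c,
   and then omega(E_i) >= (||E_i||_F + c) / 2 gives ||E_i||_F <= c. *)

Set Implicit Arguments.
Unset Strict Implicit.
Unset Printing Implicit Defensive.

Import Order.TTheory GRing.Theory Num.Theory.
Local Open Scope ring_scope.
Local Open Scope complex_scope.

Section InnerProduct.
Variables (R : realType) (n : nat).
Implicit Types (x y z : 'cV[R[i]]_n) (a b : R[i]).

Lemma ipZl a x z : ip (a *: x) z = a * ip x z.
Proof. by rewrite /ip mulr_sumr; apply: eq_bigr => k _; rewrite !mxE mulrA. Qed.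

Lemma ipDl x y z : ip (x + y) z = ip x z + ip y z.
Proof. by rewrite /ip -big_split; apply: eq_bigr => k _; rewrite !mxE mulrDl. Qed.

Lemma ipBl x y z : ip (x - y) z = ip x z - ip y z.
Proof. by rewrite ipDl -scaleN1r ipZl mulN1r. Qed.

Lemma ip0l y : ip 0 y = 0.
Proof. by rewrite /ip big1 // => k _; rewrite mxE mul0r. Qed.

Lemma ip_suml (I : finType) (x : I -> 'cV[R[i]]_n) z :
  ip (\sum_j x j) z = \sum_j ip (x j) z.
Proof. exact: (big_morph (fun w => ip w z) (fun u v => ipDl u v z) (ip0l z)). Qed.

Lemma ipC x y : ip y x = conjc (ip x y).
Proof. by rewrite /ip rmorph_sum; apply: eq_bigr => k _; rewrite rmorphM /= conjcK mulrC. Qed.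

Lemma ipZr a x z : ip z (a *: x) = conjc a * ip z x.
Proof. by rewrite ipC ipZl rmorphM /= -ipC. Qed.

Lemma ipDr x y z : ip z (x + y) = ip z x + ip z y.
Proof. by rewrite ipC ipDl rmorphD /= -!ipC. Qed.

Lemma ip_self_ge0 x : 0 <= ip x x.
Proof. by apply: sumr_ge0 => k _; apply: mulcJ_ge0. Qed.

Lemma sqnormE x : (sqnorm x)%:C = ip x x.
Proof. by rewrite /sqnorm RRe_real // ger0_real // ip_self_ge0. Qed.

Lemma sqnorm_ge0 x : 0 <= sqnorm x.
Proof. by rewrite -ler0c sqnormE ip_self_ge0. Qed.

Lemma sqnorm_eq0 x : sqnorm x = 0 -> x = 0.
Proof.
move=> x0; have /eqP : ip x x = 0 by rewrite -sqnormE x0.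
rewrite psumr_eq0 => [/allP x_eq0|k _]; last exact: mulcJ_ge0.
apply/matrixP => k j; rewrite (ord1 j) !mxE.
by have := x_eq0 k (mem_index_enum _); rewrite mulf_eq0 conjc_eq0 orbb => /eqP.
Qed.

Lemma sqnorm_gt0 x : (0 < sqnorm x) = (x != 0).
Proof.
rewrite lt_def sqnorm_ge0 andbT; apply/idP/idP; apply: contraNN => /eqP.
  by move->; rewrite /sqnorm ip0l.
by move/sqnorm_eq0->.
Qed.

End InnerProduct.

Section ComplexModulus.
Variable R : realType.
Implicit Types (a b : R[i]) (r : R).

Lemma cabsE a : (cabs a)%:C = `|a|.
Proof. by rewrite normc_def; case: a. Qed.

Lemma cabs_sqr a : (cabs a ^+ 2)%:C = a * conjc a.
Proof. by rewrite rmorphXn /= cabsE sqr_normc. Qed.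

Lemma cabs_ge0 a : 0 <= cabs a.
Proof. by rewrite -ler0c cabsE. Qed.

Lemma cabsJ a : cabs (conjc a) = cabs a.
Proof. by apply: complexI; rewrite !cabsE normcJ. Qed.

Lemma cabsM a b : cabs (a * b) = cabs a * cabs b.
Proof. by apply: complexI; rewrite rmorphM /= !cabsE normrM. Qed.

Lemma cabsR r : cabs r%:C = `|r|.
Proof. by rewrite /cabs /= expr0n addr0 sqrtr_sqr. Qed.

Lemma cabs0 : cabs (0 : R[i]) = 0.
Proof. by rewrite -(rmorph0 (real_complex R)) cabsR normr0. Qed.

Lemma Re_le_cabs a : complex.Re a <= cabs a.
Proof. by apply: le_trans (ler_norm _) _; rewrite -lecR cabsE normc_ge_Re. Qed.

End ComplexModulus.

Lemma cauchy_schwarz (R : realType) (n : nat) (x y : 'cV[R[i]]_n) :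
  cabs (ip x y) ^+ 2 <= sqnorm x * sqnorm y.
Proof.
have [->|x_neq0] := eqVneq x 0.
  by rewrite ip0l cabs0 expr0n mulr_ge0 ?sqnorm_ge0.
have x_gt0 : 0 < sqnorm x by rewrite sqnorm_gt0.
set a := ip x x; set b := ip y x.
have aJ : conjc a = a by rewrite /a -sqnormE conjc_real.
have := ip_self_ge0 (a *: y - b *: x).
rewrite ipBl !ipZl -!scaleNr !ipDr !ipZr aJ -/a -/b (ipC y x) -/b rmorphN /=.
have -> : a * (a * ip y y + - conjc b * b) + - b * (a * conjc b + - conjc b * a)
   = a * (a * ip y y - b * conjc b) by ring.
rewrite /a -!sqnormE -cabs_sqr -rmorphM -rmorphB -rmorphM ler0c.
by rewrite pmulr_rge0 // subr_ge0 cabsJ.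
Qed.

Section RankOne.
Variables (R : realType) (n : nat).
Implicit Types (x y g f v : 'cV[R[i]]_n).

Lemma adjmxM m p q (A : 'M[R[i]]_(m, p)) (B : 'M[R[i]]_(p, q)) :
  adjmx (A *m B) = adjmx B *m adjmx A.
Proof. by rewrite /adjmx map_mxM trmx_mul. Qed.

Lemma adjmxK m p (A : 'M[R[i]]_(m, p)) : adjmx (adjmx A) = A.
Proof. by apply/matrixP => i j; rewrite !mxE conjcK. Qed.

Lemma adjmx_mul_ip x y : adjmx y *m x = (ip x y)%:M.
Proof.
apply/matrixP => i j; rewrite (ord1 i) (ord1 j) !mxE /ip /=.
by apply: eq_bigr => k _; rewrite !mxE mulrC.
Qed.

Lemma rank1_mulmx g f v : g *m adjmx f *m v = ip v f *: g.
Proof. by rewrite -mulmxA adjmx_mul_ip mul_mx_scalar. Qed.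

Lemma frob_rank1 g f : frob (g *m adjmx f) = Num.sqrt (sqnorm g * sqnorm f).
Proof.
rewrite /frob adjmxM adjmxK mulmxA -(mulmxA f) adjmx_mul_ip mul_mx_scalar.
rewrite -scalemxAl mxtraceZ mxtrace_mulC adjmx_mul_ip mxtrace_scalar.
by rewrite -!sqnormE -rmorphM.
Qed.

Lemma cabs_ip_le_frob g f : cabs (ip g f) <= frob (g *m adjmx f).
Proof.
rewrite frob_rank1 -(ger0_norm (cabs_ge0 (ip g f))) -sqrtr_sqr.
by rewrite ler_sqrt ?cauchy_schwarz // mulr_ge0 ?sqnorm_ge0.
Qed.

End RankOne.

Section SupInf.
Variable R : realType.
Implicit Types (S : set R) (m x : R).

Lemma sup_attained S m : S m -> (forall x, S x -> x <= m) -> sup S = m.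
Proof.
move=> Sm ub; apply/le_anti/andP; split.
  by apply: ge_sup; [exists m | move=> x /ub].
by apply: sup_upper_bound => //; split; [exists m | exists m => x /ub].
Qed.

Lemma le_sup_bounded S m x : S x -> (forall y, S y -> y <= m) -> x <= sup S.
Proof. by move=> Sx ub; apply: sup_upper_bound => //; split; [exists x | exists m => y /ub]. Qed.

Lemma sup_le_ub S m x : S x -> (forall y, S y -> y <= m) -> sup S <= m.
Proof. by move=> Sx ub; apply: ge_sup; [exists x | move=> y /ub]. Qed.

Lemma inf_attained S m : S m -> (forall x, S x -> m <= x) -> inf S = m.
Proof.
move=> Sm lb; apply/le_anti/andP; split.
  by apply: ge_inf => //; exists m => x /lb.
by apply: lb_le_inf; [exists m | move=> x /lb].
Qed.

End SupInf.

Section RankOneRadii.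
Variables (R : realType) (n : nat).
Hypothesis n_gt0 : (0 < n)%N.
Implicit Types (g f u v : 'cV[R[i]]_n).

Lemma const1_neq0 : const_mx 1 != 0 :> 'cV[R[i]]_n.
Proof.
apply/eqP => /matrixP /(_ (Ordinal n_gt0) 0); rewrite !mxE => /eqP.
exact/negP/oner_neq0.
Qed.

(* The only possible nonzero eigenvalue of g f^* is <g, f>, with eigenvector g. *)
Lemma specrad_rank1 g f : specrad (g *m adjmx f) = cabs (ip g f).
Proof.
apply: sup_attained.
  have [->|g_neq0] := eqVneq g 0.
    exists 0; last by rewrite ip0l.
    by exists (const_mx 1); [exact: const1_neq0 | rewrite rank1_mulmx scaler0 scale0r].
  by exists (ip g f) => //; exists g => //; rewrite rank1_mulmx.
move=> _ [l [v v_neq0 Tv] <-].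
have [->|l_neq0] := eqVneq l 0; first by rewrite cabs0 cabs_ge0.
rewrite rank1_mulmx in Tv.
have vg_neq0 : ip v f *: g != 0 by rewrite Tv scaler_eq0 negb_or l_neq0.
move: (vg_neq0); rewrite scaler_eq0 negb_or => /andP[vf_neq0 g_neq0].
have /eqP := congr1 (fun w => g *m adjmx f *m w) Tv.
rewrite /= -scalemxAr !rank1_mulmx ipZl scalerA -subr_eq0 -scalerBl scaler_eq0.
rewrite (negbTE g_neq0) orbF [l * _]mulrC -mulrBr mulf_eq0 (negbTE vf_neq0).
by rewrite subr_eq0 => /eqP ->.
Qed.

Lemma exists_unit_rayleigh (T : 'M[R[i]]_n) v : v != 0 ->
  exists u, sqnorm u = 1 /\ cabs (ip (T *m u) u) = cabs (ip (T *m v) v) / sqnorm v.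
Proof.
rewrite -sqnorm_gt0 => v_gt0; set s := (Num.sqrt (sqnorm v))^-1.
have s2 : s ^+ 2 = (sqnorm v)^-1 by rewrite /s exprVn sqr_sqrtr // ltW.
exists (s%:C *: v); split.
  apply: complexI; rewrite sqnormE ipZl ipZr conjc_real -sqnormE -!rmorphM /=.
  by rewrite mulrA -expr2 s2 mulVf // gt_eqF.
rewrite -scalemxAr ipZl ipZr conjc_real mulrA -rmorphM /= cabsM cabsR -expr2 s2.
by rewrite ger0_norm ?invr_ge0 ?ltW // mulrC.
Qed.

Lemma exists_unit_vector : exists u : 'cV[R[i]]_n, sqnorm u = 1.
Proof. by have [u [u1 _]] := exists_unit_rayleigh 0 const1_neq0; exists u. Qed.

Lemma rayleigh_rank1_le_frob g f u : sqnorm u = 1 ->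
  cabs (ip (g *m adjmx f *m u) u) <= frob (g *m adjmx f).
Proof.
move=> u1; rewrite rank1_mulmx ipZl cabsM frob_rank1.
have := cauchy_schwarz u f; have := cauchy_schwarz g u; rewrite u1 mul1r mulr1 => gu uf.
rewrite -(ger0_norm (mulr_ge0 (cabs_ge0 _) (cabs_ge0 _))) -sqrtr_sqr ler_sqrt; last first.
  by rewrite mulr_ge0 // sqnorm_ge0.
by rewrite exprMn mulrC ler_pM // exprn_ge0 // cabs_ge0.
Qed.

Lemma numrad_rank1_le_frob g f : numrad (g *m adjmx f) <= frob (g *m adjmx f).
Proof.
have [u u1] := exists_unit_vector.
apply: (@sup_le_ub _ _ _ (cabs (ip (g *m adjmx f *m u) u))); first by exists u.
by move=> _ [w w1 <-]; apply: rayleigh_rank1_le_frob.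
Qed.

Lemma rayleigh_le_numrad_rank1 g f v : v != 0 ->
  cabs (ip (g *m adjmx f *m v) v) / sqnorm v <= numrad (g *m adjmx f).
Proof.
move=> v_neq0; have [u [u1 <-]] := exists_unit_rayleigh (g *m adjmx f) v_neq0.
apply: (@le_sup_bounded _ _ (frob (g *m adjmx f))); first by exists u.
by move=> _ [w w1 <-]; apply: rayleigh_rank1_le_frob.
Qed.

Lemma cabs_ip_le_numrad g f : cabs (ip g f) <= numrad (g *m adjmx f).
Proof.
have [->|g_neq0] := eqVneq g 0.
  rewrite ip0l cabs0; apply: le_trans (rayleigh_le_numrad_rank1 0 f const1_neq0).
  by rewrite divr_ge0 ?cabs_ge0 ?sqnorm_ge0.
apply: le_trans (rayleigh_le_numrad_rank1 g f g_neq0).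
rewrite rank1_mulmx ipZl cabsM -sqnormE cabsR ger0_norm ?sqnorm_ge0 // mulfK //.
by rewrite gt_eqF // sqnorm_gt0.
Qed.

End RankOneRadii.

Lemma frob_add_trace_le_numrad (R : realType) (n : nat) (g f : 'cV[R[i]]_n) (c : R) :
  ip g f = c%:C -> 0 < c -> (frob (g *m adjmx f) + c) / 2 <= numrad (g *m adjmx f).
Proof.
move=> gf c_gt0.
have gf_neq0 : ip g f != 0 by rewrite gf; apply/eqP => /complexI /eqP; rewrite gt_eqF.
have g_gt0 : 0 < sqnorm g by rewrite sqnorm_gt0; apply: contraNneq gf_neq0 => ->; rewrite ip0l.
have f_gt0 : 0 < sqnorm f.
  by rewrite sqnorm_gt0; apply: contraNneq gf_neq0 => ->; rewrite ipC ip0l conjc0.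
set a := Num.sqrt (sqnorm f); set b := Num.sqrt (sqnorm g).
have a_gt0 : 0 < a by rewrite sqrtr_gt0.
have b_gt0 : 0 < b by rewrite sqrtr_gt0.
have gg : ip g g = (b ^+ 2)%:C by rewrite -sqnormE sqr_sqrtr // ltW.
have ff : ip f f = (a ^+ 2)%:C by rewrite -sqnormE sqr_sqrtr // ltW.
have fg : ip f g = c%:C by rewrite ipC gf conjc_real.
have frobE : frob (g *m adjmx f) = a * b by rewrite frob_rank1 sqrtrM ?ltW // mulrC.
pose v := a%:C *: g + b%:C *: f.
have Tvv : ip (g *m adjmx f *m v) v = (a * b * (a * b + c) ^+ 2)%:C.
  rewrite rank1_mulmx ipZl /v ipDl !ipZl ipDr !ipZr ?gg ?ff ?gf ?fg !conjc_real.
  by rewrite !(rmorphM, rmorphD, rmorphXn) /=; ring.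
have vv : sqnorm v = 2 * (a * b) * (a * b + c).
  apply: complexI; rewrite sqnormE /v ipDl !ipZl !ipDr !ipZr ?gg ?ff ?gf ?fg !conjc_real.
  by rewrite !(rmorphM, rmorphD, rmorphXn, rmorph_nat) /=; ring.
have ab_gt0 := mulr_gt0 a_gt0 b_gt0.
have v_neq0 : v != 0 by rewrite -sqnorm_gt0 vv !mulr_gt0 ?addr_gt0.
apply: le_trans (rayleigh_le_numrad_rank1 g f v_neq0).
rewrite Tvv cabsR vv frobE ger0_norm; last first.
  by rewrite mulr_ge0 ?exprn_ge0 // ltW // addr_gt0.
suff -> : a * b * (a * b + c) ^+ 2 / (2 * (a * b) * (a * b + c)) = (a * b + c) / 2 by [].
by field; rewrite !gt_eqF ?addr_gt0.
Qed.

Section DualTrace.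
Variables (R : realType) (n N : nat).
Implicit Types (F G : 'I_N -> 'cV[R[i]]_n).

Lemma ip_delta_mx k (y : 'cV[R[i]]_n) : ip (delta_mx k 0) y = conjc (y k 0).
Proof.
rewrite /ip (bigD1 k) //= big1 ?addr0; first by rewrite mxE !eqxx mul1r.
by move=> l lk; rewrite mxE (negbTE lk) mul0r.
Qed.

(* [sum_i <F i, G i>] is the trace of the identity [sum_i F i (G i)^*]. *)
Lemma dual_trace F G : is_dual F G -> \sum_i ip (F i) (G i) = n%:R.
Proof.
move=> FG; rewrite /ip exchange_big /= -[n in n%:R]card_ord -sumr_const.
apply: eq_bigr => k _.
have := congr1 (fun M : 'cV[R[i]]_n => M k 0) (FG (delta_mx k 0)).
rewrite /= mxE !eqxx mulr1n summxE => ->; apply: eq_bigr => i _.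
by rewrite mxE ip_delta_mx mulrC.
Qed.

Lemma dual_trace_Re F G : is_dual F G -> \sum_i complex.Re (ip (F i) (G i)) = n%:R.
Proof. by move=> FG; rewrite -raddf_sum dual_trace // raddfMn. Qed.

End DualTrace.

Section MeanArgument.
Variables (R : realType) (N : nat) (s : R).
Hypothesis N_gt0 : (0 < N)%N.
Variable t : 'I_N -> R[i].
Hypothesis sum_Re_t : \sum_i complex.Re (t i) = s.

Lemma sum_mean : \sum_(i < N) (s / N%:R) = s.
Proof. by rewrite sumr_const card_ord -[_ *+ N]mulr_natr divfK // pnatr_eq0 -lt0n. Qed.

Lemma exists_cabs_ge_mean : exists i, s / N%:R <= cabs (t i).
Proof.
have [i mean_le|lt_mean] := pickP (fun i => s / N%:R <= complex.Re (t i)).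
  by exists i; apply: le_trans mean_le (Re_le_cabs _).
have : \sum_(i < N) complex.Re (t i) < \sum_(i < N) (s / N%:R).
  apply: ltr_sum; first by apply/hasP; exists (Ordinal N_gt0); rewrite ?mem_index_enum.
  by move=> i _; rewrite ltNge lt_mean.
by rewrite sum_Re_t sum_mean ltxx.
Qed.

Lemma cabs_le_mean_eq : (forall i, cabs (t i) <= s / N%:R) -> forall i, t i = (s / N%:R)%:C.
Proof.
move=> le_mean i; set c := s / N%:R.
have gap_ge0 j : 0 <= c - complex.Re (t j).
  by rewrite subr_ge0; apply: le_trans (Re_le_cabs _) (le_mean j).
have sum_gap : \sum_j (c - complex.Re (t j)) = 0 by rewrite sumrB sum_Re_t sum_mean subrr.
have /eqP := psumr_eq0P (fun j _ => gap_ge0 j) sum_gap (i := i) isT.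
rewrite subr_eq0 => /eqP Re_ti.
have c_ge0 : 0 <= c := le_trans (cabs_ge0 _) (le_mean i).
have := le_mean i; rewrite -/c; case: (t i) Re_ti => a b /= <-.
rewrite /cabs /= => le_c.
have : c ^+ 2 + b ^+ 2 <= c ^+ 2 by rewrite -ler_sqrt ?sqr_ge0 // sqrtr_sqr ger0_norm.
rewrite gerDl => b2_le0.
suff -> : b = 0 by [].
by apply/eqP; rewrite -sqrf_eq0 eq_le b2_le0 sqr_ge0.
Qed.

End MeanArgument.

Lemma prim_root_exists (C : numClosedFieldType) (N : nat) :
  (0 < N)%N -> exists z : C, N.-primitive_root z.
Proof.
move=> N_gt0; have [r Xn1E] := closed_field_poly_normal ('X^N - 1 : {poly C}).
rewrite (monicP (monicXnsubC 1 N_gt0)) scale1r in Xn1E.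
have r_unity : all N.-unity_root r by apply/allP => z; rewrite -root_prod_XsubC -Xn1E.
have size_r : (N < (size r).+1)%N by rewrite -(size_prod_XsubC r id) -Xn1E size_XnsubC.
have [|z] := hasP (has_prim_root N_gt0 r_unity _ size_r); last by exists z.
by rewrite -separable_prod_XsubC -Xn1E separable_Xn_sub_1 // pnatr_eq0 -lt0n.
Qed.

Lemma sum_unity_root_expr (K : idomainType) (N : nat) (z : K) : N.-unity_root z ->
  \sum_(j < N) z ^+ j = if z == 1 then N%:R else 0.
Proof.
move=> /unity_rootP zN; have [->|z_neq1] := eqVneq z 1.
  by rewrite (eq_bigr (fun _ => 1)) ?sumr_const ?card_ord // => j _; rewrite expr1n.
have /esym/eqP := subrX1 z N; rewrite zN subrr mulf_eq0 subr_eq0 (negbTE z_neq1).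
by move/eqP.
Qed.

Section SelfDualFrames.
Variables (R : realType) (n N : nat).
Implicit Types (h : 'I_N -> 'cV[R[i]]_n) (f : 'cV[R[i]]_n).

Lemma self_dual_parseval h f : is_dual h h -> sqnorm f = \sum_j cabs (ip f (h j)) ^+ 2.
Proof.
move=> hh; apply: complexI; rewrite sqnormE {1}(hh f) ip_suml rmorph_sum.
by apply: eq_bigr => j _; rewrite ipZl (ipC f (h j)); exact: (esym (cabs_sqr _)).
Qed.

Lemma self_dual_pair h : is_dual h h -> dual_pair h h.
Proof.
move=> hh; have h_frame : is_frame h.
  exists 1, 1; split; first exact: ltr01.
  by split => // f; rewrite mul1r -self_dual_parseval // lexx.
by do !split.
Qed.

End SelfDualFrames.

Section HarmonicFrame.
Variables (R : realType) (n N : nat) (w : R[i]).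
Hypothesis n_le_N : (n <= N)%N.
Hypothesis w_prim : N.-primitive_root w.

Let N_gt0 : (0 < N)%N := prim_order_gt0 w_prim.
Let w_neq0 : w != 0.
Proof. by rewrite (prim_root_eq0 w_prim) -lt0n N_gt0. Qed.

Lemma conjc_prim_root : conjc w = w^-1.
Proof.
have : `|w| ^+ N = 1 by rewrite -normrX prim_expr_order // normr1.
move/eqP; rewrite pexpr_eq1 ?normr_ge0 -?lt0n // => /eqP w1.
by apply: (mulfI w_neq0); rewrite mulfV // -sqr_normc w1 expr1n.
Qed.

Lemma sum_prim_root_ratio (k l : nat) : (k < N)%N -> (l < N)%N ->
  \sum_(j < N) (w ^+ k / w ^+ l) ^+ j = if k == l then N%:R else 0.
Proof.
move=> k_lt_N l_lt_N; rewrite sum_unity_root_expr; last first.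
  have wN j : (w ^+ j) ^+ N = 1 by rewrite -exprM mulnC exprM (prim_expr_order w_prim) expr1n.
  by apply/unity_rootP; rewrite exprMn exprVn !wN invr1 mulr1.
have wl_neq0 : w ^+ l != 0 by rewrite expf_neq0.
rewrite -[w ^+ k / _ == 1](inj_eq (mulIf wl_neq0)) mulfVK // mul1r.
by rewrite (eq_prim_root_expr w_prim) !modn_small.
Qed.

Let s : R := (Num.sqrt N%:R)^-1.

Lemma harmonic_scale_sqr : s ^+ 2 = N%:R^-1.
Proof. by rewrite /s exprVn sqr_sqrtr ?ler0n. Qed.

Definition harmonic (j : 'I_N) : 'cV[R[i]]_n := s%:C *: \col_(k < n) w ^+ (j * k).

Lemma ip_harmonic f j : ip f (harmonic j) = s%:C * \sum_(l < n) f l 0 * w ^- (j * l).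
Proof.
rewrite ipZr conjc_real; congr (_ * _); apply: eq_bigr => l _.
by rewrite mxE rmorphXn /= conjc_prim_root exprVn.
Qed.

Lemma harmonic_dual : is_dual harmonic harmonic.
Proof.
move=> f; apply/matrixP => k z; rewrite (ord1 z) summxE.
have term j : (ip f (harmonic j) *: harmonic j) k 0 =
    \sum_(l < n) f l 0 * (s ^+ 2)%:C * (w ^+ k / w ^+ l) ^+ j.
  rewrite ip_harmonic !mxE mulr_sumr mulr_suml; apply: eq_bigr => l _.
  by rewrite rmorphXn exprMn exprVn -!exprM ![(_ * j)%N]mulnC; ring.
rewrite (eq_bigr _ (fun j _ => term j)) exchange_big /=.
rewrite (eq_bigr (fun l : 'I_n => f l 0 * (s ^+ 2)%:C * (k == l :> nat)%:R * N%:R)).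
  rewrite (bigD1 k) //= big1 ?addr0; last first.
    by move=> l /negbTE l_neq_k; rewrite eq_sym [_ == _]l_neq_k !mulr0 mul0r.
  rewrite eqxx mulr1 -mulrA -(rmorph_nat (real_complex R)) -rmorphM harmonic_scale_sqr.
  by rewrite mulVf ?mulr1 // pnatr_eq0 -lt0n.
move=> l _; rewrite -mulr_sumr sum_prim_root_ratio ?(leq_trans (ltn_ord _) n_le_N) //.
by case: eqP; rewrite ?mulr1 ?mulr0 ?mul1r ?mul0r.
Qed.

Lemma sqnorm_harmonic j : sqnorm (harmonic j) = n%:R / N%:R.
Proof.
apply: complexI; rewrite sqnormE ip_harmonic /harmonic.
rewrite (eq_bigr (fun _ => s%:C)) => [|l _]; last first.
  by rewrite !mxE mulfK // expf_neq0.
rewrite sumr_const card_ord -[s%:C *+ n]mulr_natr mulrA -rmorphM -expr2 harmonic_scale_sqr.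
by rewrite -(rmorph_nat (real_complex R)) -rmorphM mulrC.
Qed.

Lemma frob_harmonic j : frob (Eop harmonic harmonic j) = n%:R / N%:R.
Proof.
by rewrite /Eop frob_rank1 sqnorm_harmonic -expr2 sqrtr_sqr ger0_norm ?divr_ge0 ?ler0n.
Qed.

End HarmonicFrame.

Definition trace_frob_bounded (R : realType) (n : nat) (M : 'M[R[i]]_n -> R) : Prop :=
  forall g f : 'cV[R[i]]_n, cabs (ip g f) <= M (g *m adjmx f) <= frob (g *m adjmx f).

Lemma trace_frob_bounded_frob (R : realType) (n : nat) : trace_frob_bounded (@frob R n).
Proof. by move=> g f; rewrite cabs_ip_le_frob lexx. Qed.

Lemma trace_frob_bounded_specrad (R : realType) (n : nat) :
  (0 < n)%N -> trace_frob_bounded (@specrad R n).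
Proof. by move=> n_gt0 g f; rewrite specrad_rank1 // lexx cabs_ip_le_frob. Qed.

Lemma trace_frob_bounded_numrad (R : realType) (n : nat) :
  (0 < n)%N -> trace_frob_bounded (@numrad R n).
Proof. by move=> n_gt0 g f; rewrite cabs_ip_le_numrad // numrad_rank1_le_frob. Qed.

Lemma M1_le (R : realType) (N n : nat) (M : 'M[R[i]]_n -> R) (F G : 'I_N -> 'cV[R[i]]_n)
    (x : R) :
  0 <= x -> M1 M F G <= x <-> (forall i, M (Eop F G i) <= x).
Proof.
move=> x_ge0; split => [/bigmax_leP[_ le_x] i | le_x]; first exact: le_x.
by apply/bigmax_leP; split => // i _; apply: le_x.
Qed.

Section Optimality.
Variables (R : realType) (n N : nat) (M : 'M[R[i]]_n -> R).
Hypotheses (n_gt0 : (0 < n)%N) (n_le_N : (n <= N)%N).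
Hypothesis M_bounded : trace_frob_bounded M.
Implicit Types (F G : 'I_N -> 'cV[R[i]]_n).

Let N_gt0 : (0 < N)%N := leq_trans n_gt0 n_le_N.
Let c : R := n%:R / N%:R.
Let c_ge0 : 0 <= c.
Proof. by rewrite divr_ge0 ?ler0n. Qed.

Lemma cabs_trace_le_M F G i : cabs (ip (F i) (G i)) <= M (Eop F G i).
Proof. by rewrite ipC cabsJ; case/andP: (M_bounded (G i) (F i)). Qed.

Lemma mean_le_M1 F G : is_dual F G -> c <= M1 M F G.
Proof.
move=> FG; have [i le_i] := exists_cabs_ge_mean N_gt0 (dual_trace_Re FG).
by apply: le_trans le_i (le_trans (cabs_trace_le_M F G i) (le_bigmax _ _ i)).
Qed.

Lemma inf_M1 : inf [set r | exists F' G', dual_pair F' G' /\ r = M1 M F' G'] = c.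
Proof.
have [w w_prim] := prim_root_exists (R[i]) N_gt0.
have HH := self_dual_pair (harmonic_dual n_le_N w_prim).
apply: inf_attained => [|_ [F [G [FG ->]]]]; last exact: mean_le_M1 FG.2.2.
exists (harmonic n w), (harmonic n w); split => //.
apply/le_anti; rewrite (mean_le_M1 HH.2.2).
apply/M1_le => // j; have /andP[_ le_frob] := M_bounded (harmonic n w j) (harmonic n w j).
by apply: le_trans le_frob _; have := frob_harmonic n w_prim j; rewrite /Eop => ->.
Qed.

Lemma optimalE F G : dual_pair F G -> optimal M F G <-> forall i, M (Eop F G i) <= c.
Proof.
move=> FG; rewrite /optimal inf_M1.
split => [[_ M1_c] | le_c]; first by apply/M1_le; rewrite ?M1_c.
split => //; apply/le_anti; rewrite (mean_le_M1 FG.2.2) andbT.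
exact/M1_le.
Qed.

End Optimality.

Section OptimalPairs.
Variables (R : realType) (n N : nat).
Hypotheses (n_gt0 : (0 < n)%N) (n_le_N : (n <= N)%N).
Variables (F G : 'I_N -> 'cV[R[i]]_n).

Lemma optimal_frob_bounded (M : 'M[R[i]]_n -> R) : trace_frob_bounded M ->
  optimal (@frob R n) F G -> optimal M F G.
Proof.
move=> M_bounded opt; have FG := opt.1.
have frob_le_c := (optimalE n_gt0 n_le_N (@trace_frob_bounded_frob R n) FG).1 opt.
apply/(optimalE n_gt0 n_le_N M_bounded FG) => i.
have /andP[_ M_le_frob] := M_bounded (G i) (F i).
exact: le_trans M_le_frob (frob_le_c i).
Qed.

Lemma optimal_numrad_frob : optimal (@numrad R n) F G -> optimal (@frob R n) F G.
Proof.
move=> opt; have FG := opt.1; have N_gt0 := leq_trans n_gt0 n_le_N.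
have le_c := (optimalE n_gt0 n_le_N (@trace_frob_bounded_numrad R n n_gt0) FG).1 opt.
apply/(optimalE n_gt0 n_le_N (@trace_frob_bounded_frob R n) FG) => i.
have trace_le j : cabs (ip (F j) (G j)) <= n%:R / N%:R.
  by rewrite ipC cabsJ; apply: le_trans (cabs_ip_le_numrad n_gt0 _ _) (le_c j).
have trace_eq := cabs_le_mean_eq N_gt0 (dual_trace_Re FG.2.2) trace_le i.
have GF : ip (G i) (F i) = (n%:R / N%:R)%:C by rewrite ipC trace_eq conjc_real.
have c_gt0 : 0 < n%:R / N%:R :> R by rewrite divr_gt0 ?ltr0n.
have := le_trans (frob_add_trace_le_numrad GF c_gt0) (le_c i).
by rewrite ler_pdivrMr ?ltr0n // mulr_natr mulr2n lerD2r.
Qed.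

End OptimalPairs.

Lemma optimal_dim0 (R : realType) (N : nat) (M : 'M[R[i]]_0 -> R)
    (F G : 'I_N -> 'cV[R[i]]_0) :
  dual_pair F G -> optimal M F G.
Proof.
move=> FG; split => //; apply/esym/inf_attained => [|_ [F' [G' [_ ->]]]]; first by exists F, G.
suff -> : M1 M F' G' = M1 M F G by [].
by apply: eq_bigr => i _; rewrite (flatmx0 (Eop F' G' i)) (flatmx0 (Eop F G i)).
Qed.

Theorem theorem6p1 (R : realType) (N n : nat) (F G : 'I_N -> 'cV[R[i]]_n) :
  (n <= N)%N -> dual_pair F G ->
  (optimal (@frob R n) F G -> optimal (@specrad R n) F G) /\
  (optimal (@frob R n) F G <-> optimal (@numrad R n) F G) /\
  (optimal (@numrad R n) F G -> optimal (@specrad R n) F G).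
Proof.
case: n F G => [|n] F G n_le_N FG.
  by split; [|split; [split|]] => _; exact: optimal_dim0.
have n_gt0 : (0 < n.+1)%N by [].
have frob_specrad := optimal_frob_bounded n_gt0 n_le_N (@trace_frob_bounded_specrad R _ n_gt0).
have frob_numrad := optimal_frob_bounded n_gt0 n_le_N (@trace_frob_bounded_numrad R _ n_gt0).
have numrad_frob := optimal_numrad_frob n_gt0 n_le_N (F := F) (G := G).
split; first exact: frob_specrad.
split; first by split; [exact: frob_numrad | exact: numrad_frob].
by move=> /numrad_frob /frob_specrad.
Qed.
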